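(* Let $\varSigma$ be a surface diffeomorphic to $T^2$ or to the Klein bottle. If $\mathrm{D}$ is any flat connection on $\varSigma$ and $\xi$ is any $1$-form on $\varSigma$, then the connection $\nabla=\mathrm{D}-\xi\otimes\mathrm{Id}$ on $\varSigma$ (i.e.\ $\nabla_vw=\mathrm{D}_vw-\xi(v)w$) has skew-symmetric Ricci tensor. Conversely, every connection on $\varSigma$ with skew-symmetric Ricci tensor equals $\mathrm{D}-\xi\otimes\mathrm{Id}$ for some flat connection $\mathrm{D}$ on $\varSigma$ and some $1$-form $\xi$ on $\varSigma$.
   Context: Connections are in $T\varSigma$ and may have torsion. Curvature: $R(u,v)w=\nabla_v\nabla_u w-\nabla_u\nabla_v w+\nabla_{[u,v]}w$; Ricci tensor: $\rho(u,v)=\mathrm{tr}[w\mapsto R(u,w)v]$. *)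

(* Surfaces modelled by their universal cover R^2
   together with the (affine) deck transformation generators. *)
From Stdlib Require List.
From HB Require Import structures.
From mathcomp Require Import all_boot all_order all_algebra.
From mathcomp Require Import all_classical all_reals all_analysis.
Set Implicit Arguments. Unset Strict Implicit. Unset Printing Implicit Defensive.
Import Order.TTheory GRing.Theory Num.Theory.
Import numFieldNormedType.Exports.
Local Open Scope ring_scope.

Section Defs.
Variable R : realType.

Notation pt := 'rV[R]_2.

Definition ebase (i : 'I_2) : pt := delta_mx 0 i.

Definition pd (f : pt -> R^o) (i : 'I_2) : pt -> R^o :=
  fun p => 'D_(ebase i) f p.

Fixpoint Ck (n : nat) (f : pt -> R^o) : Prop :=
  match n with
  | 0 => continuous f
  | n.+1 => continuous f /\
      forall i, (forall p, derivable f p (ebase i)) /\ Ck n (pd f i)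
  end.
Definition smooth (f : pt -> R^o) : Prop := forall n, Ck n f.

Record deck := Deck { sgn : 'I_2 -> R; tr : pt }.
Definition act (g : deck) (p : pt) : pt := \row_j (sgn g j * p 0 j + tr g 0 j).

Definition sg2 (a b : R) : 'I_2 -> R := fun i => if i == 0 then a else b.
Definition v2 (a b : R) : pt := \row_j (if j == 0 then a else b).

(* T^2 = R^2 / <(x,y)->(x+1,y), (x,y)->(x,y+1)> *)
Definition torus_gens : seq deck :=
  [:: Deck (sg2 1 1) (v2 1 0); Deck (sg2 1 1) (v2 0 1)].
(* Klein bottle = R^2 / <(x,y)->(x+1,-y), (x,y)->(x,y+1)> *)
Definition klein_gens : seq deck :=
  [:: Deck (sg2 1 (-1)) (v2 1 0); Deck (sg2 1 1) (v2 0 1)].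

(* A (possibly torsion) connection on R^2, in coordinates:
   nabla_{d_i} d_j = sum_k G i j k d_k. *)
Definition chr := 'I_2 -> 'I_2 -> 'I_2 -> pt -> R^o.

(* G descends to the quotient surface: smooth and deck-invariant *)
Definition connection_on (gens : seq deck) (G : chr) : Prop :=
  (forall i j k, smooth (G i j k)) /\
  (forall g, List.In g gens -> forall i j k p,
     G i j k (act g p) = sgn g i * sgn g j * sgn g k * G i j k p).

(* 1-form xi = sum_i xi_i dx^i descending to the quotient *)
Definition one_form_on (gens : seq deck) (xi : 'I_2 -> pt -> R^o) : Prop :=
  (forall i, smooth (xi i)) /\
  (forall g, List.In g gens -> forall i p, xi i (act g p) = sgn g i * xi i p).

(* m-th component of R(d_i,d_j)d_l, with
   R(u,v)w = nabla_v nabla_u w - nabla_u nabla_v w + nabla_[u,v] w *)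
Definition curv (G : chr) (i j l m : 'I_2) (p : pt) : R :=
  pd (G i l m) j p - pd (G j l m) i p
  + \sum_(k < 2) (G i l k p * G j k m p - G j l k p * G i k m p).

(* rho(d_i,d_l) = tr [w |-> R(d_i,w) d_l] *)
Definition ricci (G : chr) (i l : 'I_2) (p : pt) : R :=
  \sum_(j < 2) curv G i j l j p.

Definition flat (G : chr) : Prop := forall i j l m p, curv G i j l m p = 0.

Definition ricci_skew (G : chr) : Prop :=
  forall i l p, ricci G i l p = - ricci G l i p.

Definition minus_xi_id (D : chr) (xi : 'I_2 -> pt -> R^o) : chr :=
  fun i j k p => D i j k p - xi i p * (if j == k then 1 else 0).

End Defs.

From HB Require Import structures.
From mathcomp Require Import all_boot all_order all_algebra.
From mathcomp Require Import all_classical all_reals all_analysis.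
From mathcomp Require Import ring lra.
Set Implicit Arguments. Unset Strict Implicit.
Import Order.TTheory GRing.Theory Num.Theory.
Import numFieldNormedType.Exports.
Local Open Scope ring_scope.

(* In dimension two the curvature is determined by the endomorphism
   A = R(d_0, d_1), and the Ricci tensor is skew exactly when A is a scalar
   multiple of the identity.  Replacing nabla by nabla - xi (x) Id changes A
   by -(d xi) Id, and the trace of A is the exterior derivative of the trace
   of the Christoffel symbols.  Hence D - xi (x) Id has scalar curvature
   whenever D is flat, and conversely for a connection with scalar curvature
   the choice xi = -(1/2) tr Gamma_i makes nabla + xi (x) Id flat.  Deck
   transformations with entries +-1 preserve all these constructions. *)

Section TwoDimensionalConnections.
Variable R : realType.
Notation pt := 'rV[R]_2.

Lemma ord2P (i : 'I_2) : i = 0 \/ i = 1.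
Proof. by case: i => [[|[|n]] Hn] //; [left|right]; exact/val_inj. Qed.

Lemma big_ord2 (F : 'I_2 -> R) : \sum_(k < 2) F k = F 0 + F 1.
Proof.
by rewrite big_ord_recl big_ord_recl big_ord0 addr0; congr (_ + F _); exact/val_inj.
Qed.

Definition kdelta (j k : 'I_2) : R := if j == k then 1 else 0.

Lemma pd_lin (f g : pt -> R^o) (a b : R) (i : 'I_2) (p : pt) :
  derivable f p (ebase R i) -> derivable g p (ebase R i) ->
  pd (fun q => a * f q + b * g q) i p = a * pd f i p + b * pd g i p.
Proof.
move=> df dg; have -> : (fun q => a * f q + b * g q) = a \*: f + b \*: g by [].
by rewrite /pd deriveD ?deriveZ //; apply: derivableZ.
Qed.

Lemma continuous_lin (f g : pt -> R^o) (a b : R) :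
  continuous f -> continuous g -> continuous (fun q => a * f q + b * g q).
Proof.
move=> cf cg q; apply: (@continuousD R _ _ (fun q => a * f q) (fun q => b * g q)).
  by apply: continuousM; [exact: cst_continuous | exact: cf].
by apply: continuousM; [exact: cst_continuous | exact: cg].
Qed.

Lemma Ck_lin n (f g : pt -> R^o) (a b : R) :
  Ck n f -> Ck n g -> Ck n (fun q => a * f q + b * g q).
Proof.
elim: n f g => [|n IH] f g /=; first exact: continuous_lin.
move=> [cf df] [cg dg]; split; first exact: continuous_lin.
move=> i; have [df1 dfn] := df i; have [dg1 dgn] := dg i; split.
  by move=> p; apply: derivableD; apply: derivableZ.
have -> : pd (fun q => a * f q + b * g q) i = fun q => a * pd f i q + b * pd g i q.
  by apply: funext => q; rewrite pd_lin.
exact: IH.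
Qed.

Lemma smooth_lin (f g : pt -> R^o) (a b : R) :
  smooth f -> smooth g -> smooth (fun q => a * f q + b * g q).
Proof. by move=> sf sg n; apply: Ck_lin. Qed.

Lemma smooth_derivable (f : pt -> R^o) (i : 'I_2) (p : pt) :
  smooth f -> derivable f p (ebase R i).
Proof. by move=> sf; have [_ /(_ i) []] := sf 1%N. Qed.

Lemma curvN (G : chr R) i j l m p : curv G j i l m p = - curv G i j l m p.
Proof. rewrite /curv !big_ord2; ring. Qed.

Lemma curv_diag (G : chr R) i l m p : curv G i i l m p = 0.
Proof. rewrite /curv big_ord2; ring. Qed.

(* The quadratic terms form a commutator, whose trace vanishes. *)
Lemma curv_trace (G : chr R) i j p :
  curv G i j 0 0 p + curv G i j 1 1 p =
  pd (G i 0 0) j p + pd (G i 1 1) j p - pd (G j 0 0) i p - pd (G j 1 1) i p.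
Proof. rewrite /curv !big_ord2; ring. Qed.

Lemma ricci2 (G : chr R) i l p :
  ricci G i l p = curv G i 0 l 0 p + curv G i 1 l 1 p.
Proof. by rewrite /ricci big_ord2. Qed.

Lemma scalar_curv_ricci_skew (G : chr R) (F : 'I_2 -> 'I_2 -> pt -> R) :
  (forall i j l m p, curv G i j l m p = kdelta l m * F i j p) -> ricci_skew G.
Proof.
move=> hF i l p.
have F_diag k : F k k p = 0 by have := curv_diag G k 0 0 p; rewrite hF /kdelta mul1r.
have FN : F 1 0 p = - F 0 1 p.
  by have := curvN G 0 1 0 0 p; rewrite !hF /kdelta !mul1r.
rewrite !ricci2 !hF /kdelta.
by case: (ord2P i) => ->; case: (ord2P l) => -> /=; rewrite ?F_diag ?FN; ring.
Qed.

Lemma ricci_skew_scalar_curv (G : chr R) : ricci_skew G ->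
  forall i j l m p,
  curv G i j l m p = kdelta l m * ((curv G i j 0 0 p + curv G i j 1 1 p) / 2).
Proof.
move=> skG i j l m p.
have r00 := skG 0 0 p; have r11 := skG 1 1 p; have r01 := skG 0 1 p.
rewrite !ricci2 !curv_diag !(curvN G 1 0) in r00 r11 r01.
case: (ord2P i) => ->; case: (ord2P j) => ->; rewrite ?curv_diag ?(curvN G 1 0);
  case: (ord2P l) => ->; case: (ord2P m) => ->; rewrite /kdelta /=; lra.
Qed.

(* Written as a linear combination so that [smooth_lin] applies. *)
Definition plus_xi_id (G : chr R) (xi : 'I_2 -> pt -> R^o) : chr R :=
  fun i j k q => 1 * G i j k q + kdelta j k * xi i q.

Lemma plus_xi_idK (G : chr R) xi : minus_xi_id (plus_xi_id G xi) xi = G.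
Proof.
apply: funext => i; apply: funext => j; apply: funext => k; apply: funext => q.
by rewrite /minus_xi_id /plus_xi_id /kdelta; case: (_ == _); ring.
Qed.

Lemma curv_minus_xi_id (D : chr R) xi p :
  (forall i j k l, derivable (D i j k) p (ebase R l)) ->
  (forall i l, derivable (xi i) p (ebase R l)) ->
  forall i j l m,
  curv (minus_xi_id D xi) i j l m p =
  curv D i j l m p - kdelta l m * (pd (xi i) j p - pd (xi j) i p).
Proof.
move=> dD dxi i j l m.
have eq_lin k n : minus_xi_id D xi k l n = fun q => 1 * D k l n q + - kdelta l n * xi k q.
  by apply: funext => q; rewrite /minus_xi_id /kdelta mul1r mulNr mulrC.
rewrite /curv !eq_lin !pd_lin // !big_ord2 /minus_xi_id /kdelta.
by case: (ord2P l) => ->; case: (ord2P m) => -> /=; ring.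
Qed.

Lemma flat_minus_xi_id_ricci_skew (D : chr R) xi :
  (forall i j k, smooth (D i j k)) -> (forall i, smooth (xi i)) ->
  flat D -> ricci_skew (minus_xi_id D xi).
Proof.
move=> sD sxi fD.
apply: (@scalar_curv_ricci_skew _ (fun i j p => - (pd (xi i) j p - pd (xi j) i p))).
move=> i j l m p; rewrite curv_minus_xi_id ?fD; first by ring.
- by move=> *; apply: smooth_derivable.
- by move=> *; apply: smooth_derivable.
Qed.

(* Minus half the trace of the Christoffel symbols: adding it times Id makes
   the connection trace free, which kills the trace of its curvature. *)
Definition neg_half_trace (G : chr R) : 'I_2 -> pt -> R^o :=
  fun i q => - 2^-1 * G i 0 0 q + - 2^-1 * G i 1 1 q.

Lemma ricci_skew_flat_plus_trace (G : chr R) :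
  (forall i j k, smooth (G i j k)) -> ricci_skew G ->
  flat (plus_xi_id G (neg_half_trace G)).
Proof.
move=> sG skG i j l m p.
set xi := neg_half_trace G; set D := plus_xi_id G xi.
have sxi k : smooth (xi k) by apply: smooth_lin.
have sD k n r : smooth (D k n r) by apply: smooth_lin.
have := @curv_minus_xi_id D xi p
  (fun _ _ _ _ => smooth_derivable (sD _ _ _))
  (fun _ _ => smooth_derivable (sxi _)) i j l m.
rewrite plus_xi_idK ricci_skew_scalar_curv // curv_trace /xi /neg_half_trace.
rewrite !pd_lin; try by apply: smooth_derivable.
by rewrite /kdelta; case: (_ == _) => h; lra.
Qed.

Definition unit_signs (gens : seq (deck R)) : Prop :=
  forall g, List.In g gens -> forall i, sgn g i * sgn g i = 1.

Lemma torus_klein_unit_signs (gens : seq (deck R)) :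
  gens = torus_gens R \/ gens = klein_gens R -> unit_signs gens.
Proof.
by case=> -> g /= [<-|[<-|[]]] i /=; rewrite /sg2; case: (_ == _);
  rewrite ?mulr1 ?mulrNN ?mulr1.
Qed.

Lemma one_form_on_neg_half_trace gens (G : chr R) :
  unit_signs gens -> connection_on gens G -> one_form_on gens (neg_half_trace G).
Proof.
move=> sq [sG dG]; split=> [i|g gin i p]; first exact: smooth_lin.
rewrite /neg_half_trace !dG //.
by rewrite -!(mulrA (sgn g i)) (sq g gin 0) (sq g gin 1) !mul1r; ring.
Qed.

Lemma connection_on_plus_xi_id gens (G : chr R) xi :
  unit_signs gens -> connection_on gens G -> one_form_on gens xi ->
  connection_on gens (plus_xi_id G xi).
Proof.
move=> sq [sG dG] [sxi dxi]; split=> [i j k|g gin i j k p].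
  exact: smooth_lin.
rewrite /plus_xi_id dG // dxi // /kdelta; case: eqP => [->|_]; last by ring.
by rewrite -(mulrA (sgn g i)) (sq g gin k) ?mul1r ?mulr1 mulrDr.
Qed.

End TwoDimensionalConnections.

Theorem theorem5p2 (R : realType) (gens : seq (deck R)) :
  gens = torus_gens R \/ gens = klein_gens R ->
  (forall (D : chr R) (xi : 'I_2 -> 'rV[R]_2 -> R^o),
     connection_on gens D -> flat D -> one_form_on gens xi ->
     ricci_skew (minus_xi_id D xi)) /\
  (forall G : chr R, connection_on gens G -> ricci_skew G ->
     exists (D : chr R) (xi : 'I_2 -> 'rV[R]_2 -> R^o),
       [/\ connection_on gens D, flat D, one_form_on gens xi &
           forall i j k p, G i j k p = minus_xi_id D xi i j k p]).
Proof.
move=> /torus_klein_unit_signs sq; split.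
  move=> D xi [sD _] fD [sxi _].
  exact: flat_minus_xi_id_ricci_skew.
move=> G cG skG.
have xiG := one_form_on_neg_half_trace sq cG.
exists (plus_xi_id G (neg_half_trace G)), (neg_half_trace G); split => //.
- exact: connection_on_plus_xi_id.
- by apply: ricci_skew_flat_plus_trace => //; case: cG.
- by move=> i j k p; rewrite plus_xi_idK.
Qed.
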